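(* Consider the infinite-horizon dynamic multi-agent system described in the context and suppose Assumption B holds. Let $\mathbf x(0)\in\mathcal X_0$ and let $(\boldsymbol\lambda^\ast,\mathbf U^\ast,\mathbf E^\ast)$ be an infinite-horizon competitive equilibrium for $\mathbf x(0)$. Then there exists a time $\bar N(\mathbf x(0))$ such that $\lambda^\ast_t=0$ for all $t>\bar N(\mathbf x(0))$.
   Context: Infinite-horizon dynamic multi-agent system: $n$ agents $\mathcal V=\{1,\dots,n\}$, time set $\mathcal T=\{0,1,2,\dots\}$. Agent $i$ has state $\mathbf x_i(t)\in\mathbb R^d$, input $\mathbf u_i(t)\in\mathbb R^m$, dynamics $\mathbf x_i(t+1)=\mathbf A_i\mathbf x_i(t)+\mathbf B_i\mathbf u_i(t)$, utility $f_i:\mathbb R^d\times\mathbb R^m\to\mathbb R$, resource consumption $h_i:\mathbb R^m\to\mathbb R$, excess resource $a_i(t)\in\mathbb R$, traded resource $e_i(t)\in\mathbb R$; $C(t)=\sum_ia_i(t)$; $\mathbf x(t)=(\mathbf x_1(t),\dots,\mathbf x_n(t))\in\mathbb R^{nd}$ with given $\mathbf x(0)$; $\mathbf U_i,\mathbf E_i$ denote the sequences $(\mathbf u_i(t))_{t\ge0}$, $(e_i(t))_{t\ge0}$, and $\mathbf U,\mathbf E$ their collections over all agents. Assumption B: (i) each $f_i$ is concave and negative definite, i.e. $f_i(\mathbf 0,\mathbf 0)=0$ and $f_i(\mathbf x,\mathbf u)<0$ for $(\mathbf x,\mathbf u)\ne(\mathbf 0,\mathbf 0)$; (ii) each $h_i$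 is non-negative and convex; (iii) $h_i(\mathbf 0)=0$; (iv) there is $C>0$ with $C(t)\ge C$ for all $t\ge0$. (Under (i) all series $\sum_t f_i$ converge in $[-\infty,0]$.) An infinite-horizon competitive equilibrium for $\mathbf x(0)$ is a triple $(\boldsymbol\lambda^\ast,\mathbf U^\ast,\mathbf E^\ast)$, $\boldsymbol\lambda^\ast=(\lambda^\ast_t)_{t\ge0}$, such that (i) for each $i$, $(\mathbf U_i^\ast,\mathbf E_i^\ast)$ attains a finite maximum of $\sum_{t=0}^\infty[f_i(\mathbf x_i(t),\mathbf u_i(t))+\lambda^\ast_te_i(t)]$ subject to the dynamics and $e_i(t)\le a_i(t)-h_i(\mathbf u_i(t))$ for all $t$; (ii) $\sum_{i=1}^ne_i^\ast(t)=0$ for all $t$. The infinite-horizon social welfare maximization problem for $\mathbf x(0)$: maximize $\sum_{i=1}^n\sum_{t=0}^\infty f_i(\mathbf x_i(t),\mathbf u_i(t))$ over $(\mathbf U,\mathbf E)$ subject to the dynamics, $e_i(t)\le a_i(t)-h_i(\mathbf u_i(t))$ and $\sum_{i=1}^ne_i(t)=0$ for all $t\ge0$. The set of feasible initial conditions $\mathcal X_0$ consists of those $\mathbf x(0)$ for which this problem has an admissible $(\mathbf U,\mathbf E)$ and finite optimal value. *)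

From HB Require Import structures.
From mathcomp Require Import all_boot all_order all_algebra.
From mathcomp Require Import all_classical all_reals all_analysis.
Set Implicit Arguments. Unset Strict Implicit. Unset Printing Implicit Defensive.
Import Order.TTheory GRing.Theory Num.Theory.
Import numFieldNormedType.Exports.
Local Open Scope ring_scope.
Local Open Scope classical_set_scope.

Fixpoint traj (R : realType) (d m : nat) (A : 'M[R]_d) (B : 'M[R]_(d, m))
  (x0 : 'cV[R]_d) (u : nat -> 'cV[R]_m) (t : nat) : 'cV[R]_d :=
  match t with
  | 0%N => x0
  | t'.+1 => A *m traj A B x0 u t' + B *m u t'
  end.

Definition concave_fun (R : realType) (d m : nat)
  (f : 'cV[R]_d -> 'cV[R]_m -> R) : Prop :=
  forall (x1 x2 : 'cV[R]_d) (u1 u2 : 'cV[R]_m) (s : R), 0 <= s <= 1 ->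
    s * f x1 u1 + (1 - s) * f x2 u2 <= f (s *: x1 + (1 - s) *: x2) (s *: u1 + (1 - s) *: u2).

Definition negative_definite (R : realType) (d m : nat)
  (f : 'cV[R]_d -> 'cV[R]_m -> R) : Prop :=
  f 0 0 = 0 /\ forall x u, (x, u) <> (0, 0) -> f x u < 0.

Definition convex_fun (R : realType) (m : nat) (h : 'cV[R]_m -> R) : Prop :=
  forall (u1 u2 : 'cV[R]_m) (s : R), 0 <= s <= 1 ->
    h (s *: u1 + (1 - s) *: u2) <= s * h u1 + (1 - s) * h u2.

Definition assumptionB (R : realType) (n d m : nat)
  (f : 'I_n -> 'cV[R]_d -> 'cV[R]_m -> R) (h : 'I_n -> 'cV[R]_m -> R)
  (a : 'I_n -> nat -> R) : Prop :=
  [/\ (forall i, concave_fun (f i) /\ negative_definite (f i)),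
      (forall i, (forall u, 0 <= h i u) /\ convex_fun (h i)),
      (forall i, h i 0 = 0) &
      exists Cmin : R, 0 < Cmin /\ forall t, Cmin <= \sum_(i < n) a i t].

Definition agent_feasible (R : realType) (m : nat) (hi : 'cV[R]_m -> R)
  (ai : nat -> R) (u : nat -> 'cV[R]_m) (e : nat -> R) : Prop :=
  forall t, e t <= ai t - hi (u t).

Definition agent_obj_partial (R : realType) (d m : nat)
  (fi : 'cV[R]_d -> 'cV[R]_m -> R) (Ai : 'M[R]_d) (Bi : 'M[R]_(d, m))
  (x0i : 'cV[R]_d) (lam : nat -> R) (u : nat -> 'cV[R]_m) (e : nat -> R)
  (N : nat) : R :=
  \sum_(0 <= t < N) (fi (traj Ai Bi x0i u t) (u t) + lam t * e t).

Definition competitive_equilibrium (R : realType) (n d m : nat)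
  (A : 'I_n -> 'M[R]_d) (B : 'I_n -> 'M[R]_(d, m))
  (f : 'I_n -> 'cV[R]_d -> 'cV[R]_m -> R) (h : 'I_n -> 'cV[R]_m -> R)
  (a : 'I_n -> nat -> R) (x0 : 'I_n -> 'cV[R]_d)
  (lam : nat -> R) (U : 'I_n -> nat -> 'cV[R]_m) (E : 'I_n -> nat -> R) : Prop :=
  (forall i : 'I_n,
     agent_feasible (h i) (a i) (U i) (E i) /\
     exists V : R,
       agent_obj_partial (f i) (A i) (B i) (x0 i) lam (U i) (E i) @ \oo --> V /\
       forall (u : nat -> 'cV[R]_m) (e : nat -> R) (l : \bar R),
         agent_feasible (h i) (a i) u e ->
         (fun N => (agent_obj_partial (f i) (A i) (B i) (x0 i) lam u e N)%:E)
           @ \oo --> l ->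
         (l <= V%:E)%E)
  /\ (forall t, \sum_(i < n) E i t = 0).

Definition sw_admissible (R : realType) (n m : nat)
  (h : 'I_n -> 'cV[R]_m -> R) (a : 'I_n -> nat -> R)
  (U : 'I_n -> nat -> 'cV[R]_m) (E : 'I_n -> nat -> R) : Prop :=
  (forall i, agent_feasible (h i) (a i) (U i) (E i)) /\
  (forall t, \sum_(i < n) E i t = 0).

Definition sw_value (R : realType) (n d m : nat)
  (A : 'I_n -> 'M[R]_d) (B : 'I_n -> 'M[R]_(d, m))
  (f : 'I_n -> 'cV[R]_d -> 'cV[R]_m -> R) (x0 : 'I_n -> 'cV[R]_d)
  (U : 'I_n -> nat -> 'cV[R]_m) : \bar R :=
  (\sum_(i < n) \sum_(0 <= t <oo) (f i (traj (A i) (B i) (x0 i) (U i) t) (U i t))%:E)%E.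

(* Feasible initial conditions X_0: an admissible plan exists and the optimal
   value (supremum of the welfare over admissible plans) is finite. *)
Definition feasible_init (R : realType) (n d m : nat)
  (A : 'I_n -> 'M[R]_d) (B : 'I_n -> 'M[R]_(d, m))
  (f : 'I_n -> 'cV[R]_d -> 'cV[R]_m -> R) (h : 'I_n -> 'cV[R]_m -> R)
  (a : 'I_n -> nat -> R) (x0 : 'I_n -> 'cV[R]_d) : Prop :=
  (exists U E, sw_admissible h a U E) /\
  ereal_sup [set v | exists U E, sw_admissible h a U E /\ v = sw_value A B f x0 U]
    \is a fin_num.

From HB Require Import structures.
From mathcomp Require Import all_boot all_order all_algebra.
From mathcomp Require Import all_classical all_reals all_analysis.
From mathcomp Require Import lra ring.
Set Implicit Arguments. Unset Strict Implicit. Unset Printing Implicit Defensive.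
Import Order.TTheory GRing.Theory Num.Theory.
Import numFieldNormedType.Exports.
Local Open Scope ring_scope.
Local Open Scope classical_set_scope.

(* Prices are nonnegative, since an agent can always trade less, and at a
   positive price every budget constraint binds, since otherwise selling the
   slack would raise the agent's objective.  By market clearing the agents
   then consume the whole resource, at least C > 0, so some agent consumes at
   least C / n.  As h_i is convex with h_i(0) = 0, this keeps u_i(t) away from
   0, and as f_i is concave and negative definite, f_i(x, u_i(t)) <= -c for a
   c > 0 independent of t (continuity of convex functions plus compactness of
   a sphere).  On the other hand market clearing makes the welfare series the
   sum of the agents' convergent objective series, so its terms tend to 0.
   Hence only finitely many periods carry a positive price. *)

Section Bounds.
Variable R : realType.

Definition lmod_convex (V : lmodType R) (phi : V -> R) :=
  forall a b (s : R), 0 <= s <= 1 ->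
  phi (s *: a + (1 - s) *: b) <= s * phi a + (1 - s) * phi b.

Lemma convex_sum_le (V : lmodType R) (phi : V -> R) (I : eqType)
    (r : seq I) (l : I -> R) (v : I -> V) :
  lmod_convex phi -> phi 0 = 0 -> (forall j, 0 <= l j) ->
  \sum_(j <- r) l j < 1 ->
  phi (\sum_(j <- r) l j *: v j) <= \sum_(j <- r) l j * phi (v j).
Proof.
move=> cvx_phi phi0; elim: r l => [|j r IH] l l_ge0; first by rewrite !big_nil phi0.
rewrite !big_cons => sum_lt1.
have sum_ge0 : 0 <= \sum_(k <- r) l k by apply: sumr_ge0.
have lj_ge0 := l_ge0 j.
pose T := 1 - l j.
have T_gt0 : 0 < T by rewrite /T; lra.
have T_neq0 : T != 0 by rewrite gt_eqF.
pose l' k := T^-1 * l k.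
have l'_ge0 k : 0 <= l' k by rewrite mulr_ge0 // invr_ge0 ltW.
have sum_l'_lt1 : \sum_(k <- r) l' k < 1.
  by rewrite -mulr_sumr ltr_pdivrMl // mulr1 /T; lra.
have -> : \sum_(k <- r) l k *: v k = T *: \sum_(k <- r) l' k *: v k.
  by rewrite scaler_sumr; apply: eq_bigr => k _; rewrite scalerA mulrA mulfV ?mul1r.
have -> : \sum_(k <- r) l k * phi (v k) = T * \sum_(k <- r) l' k * phi (v k).
  by rewrite mulr_sumr; apply: eq_bigr => k _; rewrite !mulrA mulfV ?mul1r.
have lj01 : 0 <= l j <= 1 by apply/andP; split; lra.
apply: le_trans (cvx_phi _ _ _ lj01) _.
by rewrite lerD2l ler_wpM2l ?IH // ltW.
Qed.

Lemma mx_norm_coord_le p q (w : 'M[R]_(p, q)) i j : `|w i j| <= `|w|.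
Proof.
by rewrite [leRHS]/Num.norm /= mx_normrE (le_bigmax _ (fun k => `|w k.1 k.2|) (i, j)).
Qed.

Lemma mx_norm_le p q (w : 'M[R]_(p, q)) (M : R) :
  0 <= M -> (forall i j, `|w i j| <= M) -> `|w| <= M.
Proof.
by move=> M_ge0 wM; rewrite /Num.norm /= mx_normrE; apply: bigmax_le => // -[i j].
Qed.

Lemma mx_norm_row_mxr p q1 q2 (u : 'M[R]_(p, q1)) (v : 'M[R]_(p, q2)) :
  `|v| <= `|row_mx u v|.
Proof.
apply: mx_norm_le => // i j.
by rewrite -(row_mxEr u v i j); apply: mx_norm_coord_le.
Qed.

Lemma sum_norm_coord_le k (w : 'rV[R]_k) : \sum_j `|w 0 j| <= k%:R * `|w|.
Proof.
apply: (@le_trans _ _ (\sum_(j < k) `|w|)).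
  by apply: ler_sum => j _; apply: mx_norm_coord_le.
by rewrite sumr_const card_ord mulr_natl.
Qed.

(* [w] is a sub-convex combination of the vectors [+-e_j] with weights [|w_j|]. *)
Lemma convex_locally_bounded_above k (phi : 'rV[R]_k -> R) (p : 'rV[R]_k) :
  lmod_convex phi -> exists2 M : R, 0 <= M & forall w : 'rV[R]_k,
    \sum_j `|w 0 j| < 1 -> phi (p + w) <= phi p + M * \sum_j `|w 0 j|.
Proof.
move=> cvx_phi.
pose psi v := phi (p + v) - phi p.
have cvx_psi : lmod_convex psi.
  move=> a b s s01; rewrite /psi.
  have -> : p + (s *: a + (1 - s) *: b) = s *: (p + a) + (1 - s) *: (p + b).
    by rewrite !scalerDr addrACA -scalerDl [s + _]addrC subrK scale1r.
  have := cvx_phi (p + a) (p + b) s s01; lra.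
have psi0 : psi 0 = 0 by rewrite /psi addr0 subrr.
pose M := \sum_(j < k) (`|psi (delta_mx 0 j)| + `|psi (- delta_mx 0 j)|).
exists M; first by apply: sumr_ge0 => j _; rewrite addr_ge0.
move=> w w_small.
pose e j : 'rV[R]_k := if 0 <= w 0 j then delta_mx 0 j else - delta_mx 0 j.
have wE : w = \sum_(j < k) `|w 0 j| *: e j.
  rewrite {1}[w]row_sum_delta; apply: eq_bigr => j _; rewrite /e.
  case: ifP => w_ge0; first by rewrite ger0_norm.
  by rewrite ltr0_norm ?ltNge ?w_ge0 // scaleNr scalerN opprK.
have psi_e_le j : psi (e j) <= M.
  apply: le_trans (ler_norm _) _.
  apply: (@le_trans _ _ (`|psi (delta_mx 0 j)| + `|psi (- delta_mx 0 j)|)).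
    by rewrite /e; case: ifP => _; [rewrite lerDl | rewrite lerDr].
  by rewrite /M (bigD1 j) //= lerDl; apply: sumr_ge0 => i _; rewrite addr_ge0.
suff : psi w <= M * \sum_j `|w 0 j| by rewrite /psi; lra.
rewrite {1}wE; apply: le_trans (convex_sum_le _ cvx_psi psi0 _ w_small) _ => //.
by rewrite mulr_sumr; apply: ler_sum => j _; rewrite mulrC ler_wpM2r.
Qed.

Lemma convex_locally_lipschitz k (phi : 'rV[R]_k -> R) (p : 'rV[R]_k) :
  lmod_convex phi -> exists2 L : R, 0 <= L & forall z : 'rV[R]_k,
    `|z| < (k%:R + 1)^-1 -> `|phi (p + z) - phi p| <= L * `|z|.
Proof.
move=> cvx_phi; have [M M_ge0 phiM] := convex_locally_bounded_above p cvx_phi.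
exists (M * k%:R) => [|z z_small]; first by rewrite mulr_ge0.
have z_ge0 : 0 <= `|z| by [].
have z_coord := sum_norm_coord_le z.
have kz_lt1 : k%:R * `|z| < 1.
  have : (k%:R + 1) * `|z| < 1 by rewrite -ltr_pdivlMl ?mulr1 //; lra.
  have k_ge0 : 0 <= k%:R :> R by [].
  nra.
have sum_oppz : \sum_j `|(- z) 0 j| = \sum_j `|z 0 j|.
  by apply: eq_bigr => j _; rewrite mxE normrN.
have up_plus := phiM z (le_lt_trans z_coord kz_lt1).
have up_minus : phi (p - z) <= phi p + M * \sum_j `|z 0 j|.
  by rewrite -sum_oppz; apply: phiM; rewrite sum_oppz; apply: le_lt_trans kz_lt1.
(* convexity along the segment from [p - z] to [p + z] bounds [phi p] from above *)
have mid : phi p <= 2^-1 * phi (p + z) + (1 - 2^-1) * phi (p - z).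
  have half01 : 0 <= (2^-1 : R) <= 1 by apply/andP; split; lra.
  have := cvx_phi (p + z) (p - z) _ half01.
  have -> : (1 - 2^-1 : R) = 2^-1 by lra.
  rewrite -scalerDr addrACA subrr addr0 -mulr2n -scalerMnr scalerMnl.
  have -> : (2^-1 : R) *+ 2 = 1 by rewrite -mulr_natr; lra.
  by rewrite scale1r.
have : M * \sum_j `|z 0 j| <= M * (k%:R * `|z|) by rewrite ler_wpM2l.
rewrite -mulrA ler_norml => ?; apply/andP; split; lra.
Qed.

Lemma convex_continuous k (phi : 'rV[R]_k -> R) :
  lmod_convex phi -> continuous phi.
Proof.
move=> cvx_phi p A /nbhs_ballP [e /= e_gt0 ballA]; apply/nbhs_ballP.
have [L L_ge0 phiL] := convex_locally_lipschitz p cvx_phi.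
have k_ge0 : 0 <= k%:R :> R by [].
exists (Num.min (k%:R + 1)^-1 (e / (L + 1))).
  by rewrite /= lt_min !divr_gt0 ?invr_gt0 //; lra.
move=> w; rewrite -ball_normE /= lt_min distrC => /andP [w_near1 w_near2].
apply: ballA; rewrite -ball_normE /= distrC.
have := phiL _ w_near1; rewrite [p + _]addrC subrK => phi_w.
have : (L + 1) * `|w - p| < e by rewrite -ltr_pdivlMl //; lra.
have : 0 <= `|w - p| by [].
nra.
Qed.

(* Convexity gives [G (s *: w) <= G w] for [0 <= s <= 1], so the infimum of [G]
   outside the ball of radius [r] is its minimum on the sphere, attained by
   compactness. *)
Lemma convex_pos_bounded_away k (G : 'rV[R]_k -> R) (r : R) :
  lmod_convex G -> G 0 = 0 -> (forall w, w != 0 -> 0 < G w) -> 0 < r ->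
  exists2 c : R, 0 < c & forall w : 'rV[R]_k, r <= `|w| -> c <= G w.
Proof.
move=> cvx_G G0 G_gt0 r_gt0.
pose S := [set w : 'rV[R]_k | `|w| = r].
have radial (w : 'rV[R]_k) : r <= `|w| ->
    S ((r / `|w|) *: w) /\ G ((r / `|w|) *: w) <= G w.
  move=> rw.
  have w_gt0 : 0 < `|w| by apply: lt_le_trans rw.
  have s01 : 0 <= r / `|w| <= 1.
    by apply/andP; split; [rewrite divr_ge0 // ltW | rewrite ler_pdivrMr // mul1r].
  split.
    by rewrite /S /= mx_normZ ger0_norm ?divr_ge0 ?ltW // divfK ?gt_eqF.
  have := cvx_G w 0 _ s01; rewrite scaler0 addr0 G0 mulr0 addr0 => Gs.
  apply: le_trans Gs _.
  have := G_gt0 w; rewrite -normr_gt0 => /(_ w_gt0).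
  by move: s01 => /andP [? ?]; nra.
have [[w0 Sw0]|S0] := pselect (S !=set0); last first.
  exists 1 => // w rw; exfalso; apply: S0.
  by exists ((r / `|w|) *: w); case: (radial w rw).
have S_compact : compact S.
  apply: bounded_closed_compact.
    exists r; split; first exact: num_real.
    by move=> M rM x /= ->; apply: ltW.
  apply: (@closed_comp _ _ _ [set r]); last exact: closed_eq.
  by move=> x _; apply: norm_continuous.
have [c Sc cmin] := EVT_min_rV (ex_intro _ w0 Sw0) S_compact
  (continuous_subspaceT (convex_continuous cvx_G)).
exists (G c).
  by apply: G_gt0; rewrite -normr_gt0; move: Sc; rewrite inE /S /= => ->.
move=> w rw; have [Sw Gw] := radial w rw.
by apply: le_trans Gw; apply: cmin; rewrite inE.
Qed.

Lemma pos_lower_bound (I : finType) (c : I -> R) :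
  (forall i, 0 < c i) -> exists2 c0 : R, 0 < c0 & forall i, c0 <= c i.
Proof.
move=> c_gt0; exists (\big[Order.min/1]_i c i); last by move=> i; apply: bigmin_le.
by apply: lt_bigmin => // i _; apply: c_gt0.
Qed.

Lemma sum_le_card_mul_max (I : finType) (g : I -> R) :
  0 < \sum_j g j -> exists i, \sum_j g j <= #|I|%:R * g i.
Proof.
case: (pickP (@predT I)) => [i0 _|I0]; last by rewrite big_pred0 ?ltxx.
case: (arg_maxP g (isT : predT i0)) => i _ g_max _; exists i.
apply: (@le_trans _ _ (\sum_(j : I) g i)); last by rewrite sumr_const mulr_natl.
by apply: ler_sum => j _; apply: g_max.
Qed.

Lemma negative_definite_le0 d m (f : 'cV[R]_d -> 'cV[R]_m -> R) x u :
  negative_definite f -> f x u <= 0.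
Proof.
move=> [f0 f_neg]; case: (pselect ((x, u) = (0, 0))) => [[-> ->]|nz].
  by rewrite f0.
exact/ltW/f_neg.
Qed.

Lemma utility_bounded_away d m (f : 'cV[R]_d -> 'cV[R]_m -> R)
    (h : 'cV[R]_m -> R) (eps : R) :
  concave_fun f -> negative_definite f -> convex_fun h -> h 0 = 0 -> 0 < eps ->
  exists2 c : R, 0 < c & forall x u, eps <= h u -> f x u <= - c.
Proof.
move=> cvx_f [f0 f_neg] cvx_h h0 eps_gt0.
pose H (v : 'rV[R]_m) := h v^T.
have cvx_H : lmod_convex H.
  by move=> a b s s01; rewrite /H linearD !linearZ /=; apply: cvx_h.
have H0 : H 0 = 0 by rewrite /H trmx0 h0.
have [r r_gt0 H_small] : exists2 r : R, 0 < r & forall v, `|v| < r -> H v < eps.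
  have := @convex_continuous m H cvx_H 0.
  rewrite /continuous_at H0 => /(cvgr_lt 0) /(_ eps eps_gt0).
  move=> /nbhs_ballP [r r_gt0 Hr]; exists r => // v v_small.
  by apply: Hr; rewrite -ball_normE /= sub0r normrN.
(* The pair [(x, u)] is encoded as the row vector [row_mx x^T u^T]. *)
pose G (w : 'rV[R]_(d + m)) := - f (lsubmx w)^T (rsubmx w)^T.
have cvx_G : lmod_convex G.
  move=> a b s s01; rewrite /G !linearD !linearZ /=.
  have := cvx_f (lsubmx a)^T (lsubmx b)^T (rsubmx a)^T (rsubmx b)^T s s01; lra.
have G0 : G 0 = 0 by rewrite /G linear0 trmx0 linear0 trmx0 f0 oppr0.
have G_gt0 w : w != 0 -> 0 < G w.
  move=> w_neq0; rewrite /G oppr_gt0; apply: f_neg => -[lw0 rw0].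
  move/negP: w_neq0; apply; apply/eqP; rewrite -[w]hsubmxK.
  have -> : lsubmx w = 0 by apply: trmx_inj; rewrite lw0 trmx0.
  have -> : rsubmx w = 0 by apply: trmx_inj; rewrite rw0 trmx0.
  by rewrite row_mx0.
have [c c_gt0 Gc] := convex_pos_bounded_away cvx_G G0 G_gt0 r_gt0.
exists c => // x u eps_hu.
have r_u : r <= `|u^T|.
  by rewrite leNgt; apply/negP => /H_small; rewrite /H trmxK; lra.
have := Gc (row_mx x^T u^T) (le_trans r_u (mx_norm_row_mxr _ _)).
by rewrite /G row_mxKl row_mxKr !trmxK; lra.
Qed.

End Bounds.

Definition optimal_plan (R : realType) d m (fi : 'cV[R]_d -> 'cV[R]_m -> R)
    (hi : 'cV[R]_m -> R) (ai : nat -> R) (Ai : 'M[R]_d) (Bi : 'M[R]_(d, m))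
    (x0i : 'cV[R]_d) (lam : nat -> R) (u : nat -> 'cV[R]_m) (e : nat -> R) :=
  agent_feasible hi ai u e /\
  exists V : R,
    agent_obj_partial fi Ai Bi x0i lam u e @ \oo --> V /\
    forall (u' : nat -> 'cV[R]_m) (e' : nat -> R) (l : \bar R),
      agent_feasible hi ai u' e' ->
      (fun N => (agent_obj_partial fi Ai Bi x0i lam u' e' N)%:E) @ \oo --> l ->
      (l <= V%:E)%E.

Section OptimalPlan.
Variables (R : realType) (d m : nat) (fi : 'cV[R]_d -> 'cV[R]_m -> R).
Variables (hi : 'cV[R]_m -> R) (ai : nat -> R) (Ai : 'M[R]_d) (Bi : 'M[R]_(d, m)).
Variables (x0i : 'cV[R]_d) (lam : nat -> R) (u : nat -> 'cV[R]_m) (e : nat -> R).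
Hypothesis opt : optimal_plan fi hi ai Ai Bi x0i lam u e.

Lemma optimal_plan_deviation t (del : R) :
  e t + del <= ai t - hi (u t) -> lam t * del <= 0.
Proof.
case: opt => feas [V [obj_cvg obj_max]] del_feas.
pose e' s := if s == t then e s + del else e s.
have feas' : agent_feasible hi ai u e'.
  by move=> s; rewrite /e'; case: eqP => [->|_] //; apply: feas.
have obj'E N : agent_obj_partial fi Ai Bi x0i lam u e' N =
    agent_obj_partial fi Ai Bi x0i lam u e N + (if (t < N)%N then lam t * del else 0).
  elim: N => [|N IH]; first by rewrite /agent_obj_partial !big_geq // addr0.
  rewrite /agent_obj_partial !big_nat_recr //= -!/(agent_obj_partial _ _ _ _ _ _ _ N).
  rewrite IH /e' ltnS.
  by case: (ltngtP t N) => [tN|Nt|->] /=; ring.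
have obj'_cvg : (fun N => (agent_obj_partial fi Ai Bi x0i lam u e' N)%:E) @ \oo
    --> (V + lam t * del)%:E.
  apply: cvg_EFin; first by near=> N.
  apply: cvg_trans (near_eq_cvg _) (cvgD obj_cvg (cvg_cst (lam t * del))).
  near=> N; rewrite /= obj'E ifT //.
  by near: N; exists t.+1.
by have := obj_max u e' _ feas' obj'_cvg; rewrite lee_fin; lra.
Unshelve. all: end_near.
Qed.

Lemma optimal_plan_budget_binds t : lam t != 0 -> e t = ai t - hi (u t).
Proof.
move=> lam_neq0; have feas := opt.1 t.
have buy_less : e t + -1 <= ai t - hi (u t) by lra.
have sell_slack : e t + (ai t - hi (u t) - e t) <= ai t - hi (u t) by lra.
have lam_gt0 : 0 < lam t.
  by rewrite lt_def lam_neq0 /=; have := optimal_plan_deviation buy_less; lra.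
by have := optimal_plan_deviation sell_slack; nra.
Qed.

End OptimalPlan.

Section Equilibrium.
Variables (R : realType) (n d m : nat).
Variables (A : 'I_n -> 'M[R]_d) (B : 'I_n -> 'M[R]_(d, m)).
Variables (f : 'I_n -> 'cV[R]_d -> 'cV[R]_m -> R) (h : 'I_n -> 'cV[R]_m -> R).
Variables (a : 'I_n -> nat -> R) (x0 : 'I_n -> 'cV[R]_d).
Variables (lam : nat -> R) (U : 'I_n -> nat -> 'cV[R]_m) (E : 'I_n -> nat -> R).
Hypothesis eqm : competitive_equilibrium A B f h a x0 lam U E.

Definition welfare t := \sum_i f i (traj (A i) (B i) (x0 i) (U i) t) (U i t).

Let agent_optimal i : optimal_plan (f i) (h i) (a i) (A i) (B i) (x0 i) lam (U i) (E i) :=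
  eqm.1 i.

(* Market clearing cancels the payments [lam t * E i t] in the aggregate. *)
Lemma series_welfare N :
  series welfare N = \sum_i agent_obj_partial (f i) (A i) (B i) (x0 i) lam (U i) (E i) N.
Proof.
rewrite seriesEnat /= /agent_obj_partial.
under [RHS]eq_bigr do rewrite big_split /=.
rewrite big_split /= [X in _ + X]exchange_big /= [X in _ + X]big1 ?addr0 => [|t _].
  by rewrite /welfare [LHS]exchange_big.
by rewrite -mulr_sumr eqm.2 mulr0.
Qed.

Lemma welfare_cvg0 : welfare @ \oo --> 0.
Proof.
apply: cvg_series_cvg_0.
have /choice [V obj_cvg] i : exists V : R,
    agent_obj_partial (f i) (A i) (B i) (x0 i) lam (U i) (E i) @ \oo --> V.
  by have [_ [V [? _]]] := agent_optimal i; exists V.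
apply/cvg_ex; exists (\sum_i V i).
under eq_cvg do rewrite series_welfare.
by apply: cvg_big => //; apply: add_continuous.
Qed.

Lemma resource_exhausted t : lam t != 0 -> \sum_i h i (U i t) = \sum_i a i t.
Proof.
move=> lam_neq0; rewrite -[LHS]addr0 -[X in _ + X](eqm.2 t) -big_split /=.
apply: eq_bigr => i _.
by rewrite (optimal_plan_budget_binds (agent_optimal i)) // addrC subrK.
Qed.

Hypothesis HB : assumptionB f h a.

Lemma welfare_priced_le : exists2 c : R, 0 < c & forall t, lam t != 0 -> welfare t <= - c.
Proof.
have [f_concave h_convex h0 [Cmin [Cmin_gt0 Cmin_le]]] := HB.
have n_gt0 : (0 < n)%N.
  case: (posnP n) => // n0; have := Cmin_le 0%N.
  rewrite big1 => [|i _]; first lra.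
  by have : (i < 0)%N by rewrite -n0.
pose eps := Cmin / n%:R.
have eps_gt0 : 0 < eps by rewrite divr_gt0 // ltr0n.
have /choice [c c_spec] i : exists c : R, 0 < c /\
    forall x u, eps <= h i u -> f i x u <= - c.
  have [f_cvx f_neg] := f_concave i; have [_ h_cvx] := h_convex i.
  by have [c c_gt0 fc] := utility_bounded_away f_cvx f_neg h_cvx (h0 i) eps_gt0; exists c.
have [c0 c0_gt0 c0_le] := pos_lower_bound (fun i => (c_spec i).1).
exists c0 => // t lam_neq0.
have use_ge : Cmin <= \sum_i h i (U i t) by rewrite resource_exhausted.
have [i use_le] := sum_le_card_mul_max (lt_le_trans Cmin_gt0 use_ge).
rewrite card_ord in use_le.
have eps_le : eps <= h i (U i t).
  by rewrite /eps ler_pdivrMr ?ltr0n // mulrC (le_trans use_ge use_le).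
have fi_le := (c_spec i).2 (traj (A i) (B i) (x0 i) (U i) t) _ eps_le.
have others_le0 : \sum_(j | j != i) f j (traj (A j) (B j) (x0 j) (U j) t) (U j t) <= 0.
  by apply: sumr_le0 => j _; apply: negative_definite_le0 (f_concave j).2.
by rewrite /welfare (bigD1 i) //=; have := c0_le i; lra.
Qed.

End Equilibrium.

Theorem theorem8 (R : realType) (n d m : nat)
  (A : 'I_n -> 'M[R]_d) (B : 'I_n -> 'M[R]_(d, m))
  (f : 'I_n -> 'cV[R]_d -> 'cV[R]_m -> R) (h : 'I_n -> 'cV[R]_m -> R)
  (a : 'I_n -> nat -> R) (x0 : 'I_n -> 'cV[R]_d)
  (lam : nat -> R) (U : 'I_n -> nat -> 'cV[R]_m) (E : 'I_n -> nat -> R) :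
  assumptionB f h a ->
  feasible_init A B f h a x0 ->
  competitive_equilibrium A B f h a x0 lam U E ->
  exists Nbar : nat, forall t : nat, (Nbar < t)%N -> lam t = 0.
Proof.
move=> HB _ eqm.
have [c c_gt0 priced_le] := welfare_priced_le eqm HB.
have c_neg : - c < 0 by rewrite oppr_lt0.
have [N _ welfare_gt] := cvgr_gt 0 (welfare_cvg0 eqm) (- c) c_neg.
exists N => t N_lt_t; apply/eqP/negPn/negP => /priced_le.
by have := welfare_gt t (ltnW N_lt_t); lra.
Qed.
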